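(* Let $k\ge 0$ and $\tau\ge 1$ be integers and $0<\kappa\le 1$. Then there exists an integer $K$ such that for every blockade $\mathcal{B}=(B_1,\ldots,B_K)$ of length $K$ and width $W$ in a graph, there is an equicardinal minor $\mathcal{B}'$ of $\mathcal{B}$ of length $k$ and width at least $\kappa^{2^K\tau^\tau}W$ such that $\mathcal{B}'$ is $\tau$-support-uniform and $(\kappa,\tau)$-support-invariant.
   Context: A blockade in a graph $G$ is a sequence $\mathcal{B}=(B_i:i\in I)$ of pairwise disjoint nonempty subsets of $V(G)$ (blocks), $I$ a finite set of integers; its length is $|I|$, its width is $\min_i|B_i|$; it is equicardinal if all blocks have the same cardinality. A sub-blockade is $(B_i:i\in I')$ for $I'\subseteq I$; a contraction is $(B_i':i\in I)$ with $\emptyset\ne B_i'\subseteq B_i$; a minor is a contraction of a sub-blockade. An induced subgraph $H$ of $G$ is $\mathcal{B}$-rainbow if each vertex of $H$ lies in some block and no two lie in the same block; its support is the set of $i\in I$ with $V(H)\cap B_i\neq\emptyset$. The $\mathcal{B}$-ordering of a $\mathcal{B}$-rainbow $H$ is the linear order on $V(H)$ with $u<v$ if $u\in B_i$, $v\in B_j$, $i<j$. An ordered graph is a graph with a linear order of its vertex set; a $\mathcal{B}$-rainbow $H$ is a copy of an ordered graph $J$ if $H$ with its $\mathcal{B}$-ordering is isomorphic to $J$ as ordered graphs. The trace of $J$ relative to $\mathcal{B}$ is the set of supports of all $\mathcal{B}$-rainbow copies of $J$. $\mathcal{B}$ is $\tau$-support-uniform if for every ordered tree $J$ with $|J|\le\tau$,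 the trace of $J$ relative to $\mathcal{B}$ is either empty or consists of all subsets of $I$ of cardinality $|J|$. $\mathcal{B}$ is $(\kappa,\tau)$-support-invariant if for every contraction $\mathcal{B}'$ of $\mathcal{B}$ of width at least $\kappa$ times the width of $\mathcal{B}$, and every ordered tree $J$ with $|J|\le\tau$, the trace of $J$ relative to $\mathcal{B}$ equals the trace of $J$ relative to $\mathcal{B}'$. *)

From mathcomp Require Import all_boot all_order all_algebra.
Set Implicit Arguments. Unset Strict Implicit. Unset Printing Implicit Defensive.
Import Order.TTheory GRing.Theory Num.Theory.

(* An ordered graph on n vertices is a relation on 'I_n, the linear order
   being the natural order of 'I_n.  An ordered tree: a (simple) tree. *)
Definition ordered_tree (n : nat) (J : rel 'I_n) : Prop :=
  [/\ (0 < n)%N, symmetric J, irreflexive J,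
      (forall x y : 'I_n, connect J x y) &
      (forall (x : 'I_n) (p : seq 'I_n),
          uniq (x :: p) -> path J x p -> (2 <= size p)%N -> ~~ J (last x p) x)].

(* A blockade: index set I (a duplicate-free list of integers >= 0, viewed
   as a finite set) and blocks B i, for i in I. *)
Definition is_blockade (T : finType) (I : seq nat) (B : nat -> {set T}) : Prop :=
  [/\ uniq I,
      (forall i, i \in I -> B i != set0) &
      (forall i j, i \in I -> j \in I -> i != j -> [disjoint B i & B j])].

(* width = min_{i in I} |B i| (value for empty I is irrelevant) *)
Definition width (T : finType) (I : seq nat) (B : nat -> {set T}) : nat :=
  foldr (fun i m => minn #|B i| m) #|B (head 0%N I)| I.

Definition contraction (T : finType) (I : seq nat) (B B' : nat -> {set T}) : Prop :=
  forall i, i \in I -> B' i \subset B i /\ B' i != set0.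

(* S (a finite set of integers, given as a list up to =i) is in the trace
   of the ordered graph J relative to the blockade (I, B): there is a
   B-rainbow induced subgraph with vertices f 0 < ... < f (n-1) (in the
   B-ordering), f i lying in block g i, isomorphic to J as ordered graphs,
   with support S. *)
Definition in_trace (T : finType) (e : rel T) (I : seq nat) (B : nat -> {set T})
    (n : nat) (J : rel 'I_n) (S : seq nat) : Prop :=
  exists (f : 'I_n -> T) (g : 'I_n -> nat),
    [/\ (forall i j : 'I_n, (i < j)%N -> (g i < g j)%N),
        (forall i, g i \in I /\ f i \in B (g i)),
        (forall i j, e (f i) (f j) = J i j) &
        [seq g i | i <- enum 'I_n] =i S].

Definition support_uniform (T : finType) (e : rel T) (I : seq nat)
    (B : nat -> {set T}) (tau : nat) : Prop :=
  forall n (J : rel 'I_n), ordered_tree J -> (n <= tau)%N ->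
    (forall S, ~ in_trace e I B J S) \/
    (forall S, in_trace e I B J S <-> ({subset S <= I} /\ size (undup S) = n)).

Definition support_invariant (R : realFieldType) (T : finType) (e : rel T)
    (kappa : R) (tau : nat) (I : seq nat) (B : nat -> {set T}) : Prop :=
  forall B' : nat -> {set T}, contraction I B B' ->
    (forall i, i \in I -> (kappa * (width I B)%:R <= (#|B' i|)%:R)%R) ->
    forall n (J : rel 'I_n), ordered_tree J -> (n <= tau)%N ->
      forall S, in_trace e I B J S <-> in_trace e I B' J S.

From mathcomp Require Import all_boot all_order all_algebra.
From Stdlib Require Import Classical.
From mathcomp Require Import zify.
Import Order.TTheory GRing.Theory Num.Theory.
Set Implicit Arguments. Unset Strict Implicit. Unset Printing Implicit Defensive.

(* Stabilise, then apply Ramsey.  Call a blockade stable if every contraction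
   to width at least kappa times its width keeps all traces of ordered graphs
   on at most tau vertices.  Over a bounded index set these traces are
   described by finitely many patterns, and a contraction witnessing
   instability kills a pattern for good; so after at most #patterns
   contractions, each costing a factor kappa in width, the blockade is stable.
   Truncating all blocks to the minimum keeps it stable and makes it
   equicardinal, and stability of an equicardinal blockade passes to its
   sub-blockades as support-invariance.  Ramsey's theorem for the colourings
   "S is in the trace of J", for all small ordered graphs J at once, then
   selects k indices on which every trace is empty or complete. *)

Definition mem_invariant (P : seq nat -> Prop) : Prop :=
  forall S S', S =i S' -> P S -> P S'.

Definition homogeneous (r : nat) (P : seq nat -> Prop) (Y : seq nat) : Prop :=
  exists c : bool, forall S, {subset S <= Y} -> size (undup S) = r -> P S <-> c.

Definition ramsey_bound (r m N : nat) : Prop :=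
  forall X, uniq X -> (N <= size X)%N -> forall P, mem_invariant P ->
  exists Y, [/\ uniq Y, {subset Y <= X}, size Y = m & homogeneous r P Y].

Lemma homogeneous_sub r P Y Y' :
  {subset Y' <= Y} -> homogeneous r P Y -> homogeneous r P Y'.
Proof. by move=> sY'Y [c hc]; exists c => S sSY'; apply: hc => x /sSY' /sY'Y. Qed.

Lemma homogeneous0 P Y : mem_invariant P -> homogeneous 0 P Y.
Proof.
move=> invP; have nil_eq S : size (undup S) = 0 -> S =i [::].
  by move=> /size0nil uS x; rewrite -mem_undup uS.
have [P0|nP0] := classic (P [::]).
- by exists true => S _ /nil_eq S0; split=> // _; apply: invP P0 => x; rewrite S0.
- by exists false => S _ /nil_eq S0; split=> // /invP PS; case: nP0; apply: PS.
Qed.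

Lemma uniq_take_size (X : seq nat) m : uniq X -> (m <= size X)%N ->
  [/\ uniq (take m X), {subset take m X <= X} & size (take m X) = m].
Proof.
by move=> uX leX; split; [exact: take_uniq | exact: mem_take | exact: size_takel].
Qed.

(* Each element [x] of the chain fixes the colour of all (r+1)-sets whose
   first element along the chain is [x]; pigeonholing these colours gives the
   (r+1)-uniform case. *)
Fixpoint homogeneous_chain r (P : seq nat -> Prop) (ch : seq (nat * bool)) : Prop :=
  if ch is (x, c) :: ch' then
    (forall S, {subset S <= unzip1 ch'} -> size (undup S) = r -> P (x :: S) <-> c)
    /\ homogeneous_chain r P ch'
  else True.

Lemma homogeneous_chain_exists r : (forall m, exists N, ramsey_bound r m N) ->
  forall L, exists M, forall X, uniq X -> (M <= size X)%N ->
  forall P, mem_invariant P -> exists ch, [/\ size ch = L, uniq (unzip1 ch),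
    {subset unzip1 ch <= X} & homogeneous_chain r P ch].
Proof.
move=> ramsey_r; elim=> [|L [M chainM]]; first by exists 0 => X _ _ P _; exists [::].
have [N ramseyN] := ramsey_r M.
exists N.+1 => -[//|x X] /= /andP[xX uX] leX P invP.
have invPx : mem_invariant (fun S => P (x :: S)).
  by move=> S S' eqS; apply: invP => y; rewrite !in_cons eqS.
have [Y [uY sYX szY [c hc]]] := ramseyN X uX leX _ invPx.
have [ch [szch uch sch hch]] := chainM Y uY (eq_leq (esym szY)) P invP.
exists ((x, c) :: ch); split => /=; first by rewrite szch.
- by rewrite uch andbT; apply: contra xX => /sch /sYX.
- by move=> y; rewrite !in_cons => /orP[-> // | /sch /sYX ->]; rewrite orbT.
- by split=> // S sS; apply: hc => y /sS /sch.
Qed.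

Lemma homogeneous_chain_colour r P c ch : mem_invariant P ->
  homogeneous_chain r P ch -> forall S,
  {subset S <= [seq p.1 | p <- ch & p.2 == c]} -> size (undup S) = r.+1 -> P S <-> c.
Proof.
move=> invP; elim: ch => [|[x c'] ch IHch] /= hch S sS szS.
  by case: S sS szS => // y S /(_ y (mem_head _ _)).
case: hch => hx hch; have [xS|xS] := boolP (x \in S); last first.
  apply: IHch => // y yS; move: (sS y yS); case: ifP => // _.
  by rewrite in_cons => /orP[/eqP /= eyx | //]; rewrite -eyx yS in xS.
case: (eqVneq c' c) => [ec|nc]; last first.
  by apply: IHch => // y /sS; rewrite (negbTE nc).
subst c'; set S' := [seq y <- S | y != x].
have eqS : x :: S' =i S.
  by move=> y; rewrite in_cons mem_filter; case: eqVneq => [->|].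
have szS' : size (undup S') = r.
  rewrite -filter_undup -rem_filter ?undup_uniq // size_rem ?mem_undup //.
  by rewrite szS.
have sS' : {subset S' <= unzip1 ch}.
  move=> y; rewrite mem_filter => /andP[yx /sS]; rewrite eqxx /= in_cons (negbTE yx) /=.
  by move=> /mapP[p]; rewrite mem_filter => /andP[_ pch] ->; exact: map_f.
have [PSc cPS] := hx S' sS' szS'.
by split=> [PS | /cPS]; [apply: PSc; apply: invP PS => y; rewrite eqS | apply: invP].
Qed.

Lemma ramsey r m : exists N, ramsey_bound r m N.
Proof.
elim: r m => [|r IHr] m.
  exists m => X uX leX P invP; have [uY sYX szY] := uniq_take_size uX leX.
  by exists (take m X); split=> //; exact: homogeneous0.
have [M chainM] := homogeneous_chain_exists IHr (m + m).
exists M => X uX leX P invP.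
have [ch [szch uch sch hch]] := chainM X uX leX P invP.
pose colour c := [seq p.1 | p <- ch & p.2 == c].
have [c mc] : exists c, (m <= size (colour c))%N.
  have : (size (colour true) + size (colour false) = m + m)%N.
    rewrite !size_map !size_filter -szch -(count_predC (fun p => p.2 == true)).
    by congr (_ + _); apply: eq_count => -[? []].
  by case: (leqP m (size (colour true))) => ?; [exists true | exists false; lia].
have ucolour : uniq (colour c).
  exact: subseq_uniq (map_subseq _ (filter_subseq _ _)) uch.
have [uY sY szY] := uniq_take_size ucolour mc.
exists (take m (colour c)); split=> //.
- move=> y /sY /mapP[p]; rewrite mem_filter => /andP[_ pch] ->.
  exact/sch/map_f.
- by exists c => S sS; apply: (homogeneous_chain_colour invP hch) => y /sS /sY.
Qed.

Lemma ramsey_family (A : eqType) (r : A -> nat) (l : seq A) m : exists N,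
  forall X, uniq X -> (N <= size X)%N ->
  forall P : A -> seq nat -> Prop, (forall a, mem_invariant (P a)) ->
  exists Y, [/\ uniq Y, {subset Y <= X}, size Y = m &
             forall a, a \in l -> homogeneous (r a) (P a) Y].
Proof.
elim: l => [|a l [N ramseyN]].
  exists m => X uX leX P _; have [uY sYX szY] := uniq_take_size uX leX.
  by exists (take m X); split.
have [N' ramseyN'] := ramsey (r a) N.
exists N' => X uX leX P invP.
have [Y1 [uY1 sY1 szY1 hY1]] := ramseyN' X uX leX (P a) (invP a).
have [Y [uY sY szY hY]] := ramseyN Y1 uY1 (eq_leq (esym szY1)) P invP.
exists Y; split=> [//||//|b]; first by move=> y /sY /sY1.
rewrite in_cons => /orP[/eqP-> | bl]; last exact: hY.
exact: homogeneous_sub sY hY1.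
Qed.

Section Trace.
Variables (T : finType) (e : rel T).
Implicit Types (I S : seq nat) (B : nat -> {set T}).

Lemma in_trace_contraction I B B' n (J : rel 'I_n) S :
  contraction I B B' -> in_trace e I B' J S -> in_trace e I B J S.
Proof.
move=> BB' [f [g [g_mono fB fJ gS]]]; exists f, g; split=> // i.
by have [gI fB'] := fB i; split=> //; apply: subsetP fB'; case: (BB' _ gI).
Qed.

Lemma eq_in_trace_blocks I B1 B2 n (J : rel 'I_n) S : {in I, B1 =1 B2} ->
  in_trace e I B1 J S -> in_trace e I B2 J S.
Proof.
move=> eqB [f [g [g_mono fB fJ gS]]]; exists f, g; split=> // i.
by have [gI fB1] := fB i; rewrite -eqB.
Qed.

Lemma eq_in_trace_rel I B n (J1 J2 : rel 'I_n) S : J1 =2 J2 ->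
  in_trace e I B J1 S -> in_trace e I B J2 S.
Proof.
by move=> eqJ [f [g [g_mono fB fJ gS]]]; exists f, g; split=> // i j; rewrite -eqJ.
Qed.

Lemma eq_in_trace_support I B n (J : rel 'I_n) S1 S2 : S1 =i S2 ->
  in_trace e I B J S1 -> in_trace e I B J S2.
Proof.
by move=> eqS [f [g [g_mono fB fJ gS]]]; exists f, g; split=> // x; rewrite gS eqS.
Qed.

Lemma in_trace_support I B n (J : rel 'I_n) S : in_trace e I B J S ->
  {subset S <= I} /\ size (undup S) = n.
Proof.
move=> [f [g [g_mono fB fJ gS]]]; split.
  by move=> x; rewrite -gS => /mapP[i _ ->]; case: (fB i).
have g_inj : injective g.
  by move=> i j gij; apply: val_inj; case: (ltngtP i j) => // /g_mono; rewrite gij ltnn.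
have uS : uniq [seq g i | i <- enum 'I_n] by rewrite map_inj_uniq ?enum_uniq.
have /perm_size : perm_eq (undup S) [seq g i | i <- enum 'I_n].
  by apply: uniq_perm; rewrite ?undup_uniq // => x; rewrite mem_undup gS.
by rewrite size_map size_enum_ord.
Qed.

Lemma in_trace_nil B n (J : rel 'I_n) S : (0 < n)%N -> ~ in_trace e [::] B J S.
Proof. by move=> n_gt0 [f [g [_ fB _ _]]]; case: (fB (Ordinal n_gt0)). Qed.

Lemma in_trace_subindex I1 I2 B n (J : rel 'I_n) S : {subset I1 <= I2} ->
  in_trace e I1 B J S <-> in_trace e I2 B J S /\ {subset S <= I1}.
Proof.
move=> sI12; split=> [tr | [[f [g [g_mono fB fJ gS]]] sSI1]].
  split; last by case: (in_trace_support tr).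
  case: tr => f [g [g_mono fB fJ gS]]; exists f, g; split=> // i.
  by case: (fB i) => /sI12.
exists f, g; split=> // i; have [_ fBi] := fB i; split=> //.
by apply: sSI1; rewrite -gS map_f ?mem_enum.
Qed.

End Trace.

Lemma contraction_trans (T : finType) I (B1 B2 B3 : nat -> {set T}) :
  contraction I B1 B2 -> contraction I B2 B3 -> contraction I B1 B3.
Proof.
move=> B12 B23 i iI; have [s12 _] := B12 i iI; have [s23 B3i] := B23 i iI.
by split=> //; apply: subset_trans s23 s12.
Qed.

Section Width.
Variable T : finType.
Implicit Types (I : seq nat) (B : nat -> {set T}).

Lemma width_le I B i : i \in I -> (width I B <= #|B i|)%N.
Proof.
rewrite /width; elim: I #|B (head 0 I)| => [|a I IHI] x0 //=.
rewrite in_cons => /orP[/eqP-> | iI]; first exact: geq_minl.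
exact: leq_trans (geq_minr _ _) (IHI x0 iI).
Qed.

Lemma width_mem I B : I != [::] -> exists2 i, i \in I & width I B = #|B i|.
Proof.
pose minB := foldr (fun i m => minn #|B i| m).
suff minB_mem x0 : minB x0 I = x0 \/ exists2 i, i \in I & minB x0 I = #|B i|.
  by case: I minB_mem => // a I /(_ #|B a|)[eq_a | //] _; exists a; rewrite ?mem_head.
elim: I => [|a I IHI] /=; first by left.
case: leqP => _; first by right; exists a; rewrite ?mem_head.
by case: IHI => [|[i iI]] ->; [left | right; exists i; rewrite ?in_cons ?iI ?orbT].
Qed.

Lemma width_sub I I' B : I != [::] -> {subset I <= I'} -> (width I' B <= width I B)%N.
Proof. by move=> /(width_mem B)[i iI ->] sII'; apply/width_le/sII'. Qed.

Lemma width_equicardinal I B w : I != [::] -> (forall i, i \in I -> #|B i| = w) ->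
  width I B = w.
Proof. by move=> /(width_mem B)[i iI ->]; apply. Qed.

Lemma exists_equicardinal_contraction I B : (forall i, i \in I -> B i != set0) ->
  exists B', contraction I B B' /\ forall i, i \in I -> #|B' i| = width I B.
Proof.
move=> B_neq0; pose B' i := [set x in take (width I B) (enum (B i))].
have card_B' i : i \in I -> #|B' i| = width I B.
  move=> iI; rewrite cardsE (card_uniqP _) ?take_uniq ?enum_uniq //.
  by rewrite size_takel // -cardE width_le.
exists B'; split=> // i iI; split.
  by apply/subsetP => x; rewrite inE => /mem_take; rewrite mem_enum.
have [j jI wj] : exists2 j, j \in I & width I B = #|B j|.
  by apply: width_mem; apply: contraTneq iI => ->.
by rewrite -card_gt0 card_B' // wj card_gt0 B_neq0.
Qed.

End Width.

Section Patterns.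
Variable t : nat.

Definition rel_code := {ffun 'I_t.+1 * 'I_t.+1 -> bool}.

Definition decode_rel n (c : rel_code) : rel 'I_n := fun i j => c (inord i, inord j).

Definition encode_rel n (J : rel 'I_n) : rel_code :=
  [ffun p => [exists i : 'I_n, exists j : 'I_n,
                [&& val i == val p.1, val j == val p.2 & J i j]]].

Lemma encode_relK n (J : rel 'I_n) : (n <= t.+1)%N -> decode_rel (encode_rel J) =2 J.
Proof.
move=> le_nt i j; rewrite /decode_rel ffunE /= !inordK ?(leq_trans (ltn_ord _) le_nt) //.
apply/existsP/idP => [[i' /existsP[j' /and3P[/eqP/val_inj-> /eqP/val_inj->]]] | Jij] //.
by exists i; apply/existsP; exists j; rewrite !eqxx.
Qed.

Definition graph_code := ('I_t.+2 * rel_code)%type.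

Definition code_graph (a : graph_code) : rel 'I_(val a.1) := decode_rel a.2.
Arguments code_graph : clear implicits.

Variable L : nat.

Definition support_code := {ffun 'I_t.+1 -> 'I_L.+1}.

Definition decode_support n (s : support_code) : seq nat :=
  [seq val (s (inord i)) | i <- iota 0 n].

Definition encode_support n (g : 'I_n -> nat) : support_code :=
  [ffun i : 'I_t.+1 => inord (nth 0 [seq g j | j <- enum 'I_n] i)].

Lemma encode_supportK n (g : 'I_n -> nat) : (n <= t.+1)%N -> (forall j, g j <= L)%N ->
  decode_support n (encode_support g) = [seq g j | j <- enum 'I_n].
Proof.
move=> le_nt gL; set s := [seq g j | j <- enum 'I_n].
have sz_s : size s = n by rewrite size_map size_enum_ord.
rewrite /decode_support -[RHS](mkseq_nth 0 s) sz_s; apply/eq_in_map => i.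
rewrite mem_iota add0n => /andP[_ lt_in].
rewrite ffunE inordK ?(leq_trans lt_in) //= inordK // ltnS.
by have /mapP[j _ ->] : nth 0 s i \in s by rewrite mem_nth ?sz_s.
Qed.

(* A trace fact (J, S) with J on n <= t+1 vertices and support in [0, L] is
   coded by n, the adjacency table of J and the support listed in order. *)
Definition pattern := (graph_code * support_code)%type.

Definition pattern_in_trace (T : finType) (e : rel T) I (B : nat -> {set T})
    (u : pattern) : Prop :=
  in_trace e I B (code_graph u.1) (decode_support (val u.1.1) u.2).

Lemma pattern_of_trace (T : finType) (e : rel T) I (B : nat -> {set T})
    n (J : rel 'I_n) S :
  (forall i, i \in I -> i <= L)%N -> (n <= t.+1)%N -> in_trace e I B J S ->
  exists u, forall B', in_trace e I B' J S <-> pattern_in_trace e I B' u.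
Proof.
move=> IL le_nt [f [g [g_mono fB fJ gS]]].
have gL j : (g j <= L)%N by apply/IL; case: (fB j).
exists (inord n, encode_rel J, encode_support g) => B'.
rewrite /pattern_in_trace /code_graph /= inordK // encode_supportK //.
split=> tr.
  by apply: eq_in_trace_rel (fun i j => esym (encode_relK J le_nt i j)) _;
    apply: eq_in_trace_support tr => x; rewrite gS.
apply: (eq_in_trace_support (S1 := [seq g j | j <- enum 'I_n])) => [x|].
  by rewrite gS.
exact: eq_in_trace_rel (encode_relK J le_nt) tr.
Qed.

End Patterns.
Arguments code_graph {t} a.

Section Stable.
Variables (R : realFieldType) (T : finType) (e : rel T) (kappa : R) (tau : nat).
Variable I : seq nat.
Local Open Scope ring_scope.

(* The nontrivial half of (kappa, tau)-support-invariance, for all ordered graphs. *)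
Definition stable (B : nat -> {set T}) : Prop :=
  forall B', contraction I B B' ->
  (forall i, i \in I -> kappa * (width I B)%:R <= #|B' i|%:R) ->
  forall n (J : rel 'I_n), (n <= tau)%N ->
  forall S, in_trace e I B J S -> in_trace e I B' J S.

Lemma stable_contraction B B' : contraction I B B' -> width I B' = width I B ->
  stable B -> stable B'.
Proof.
move=> BB' wB' stB B'' B'B'' wB'' n J le_n S /(in_trace_contraction BB').
by apply: stB (contraction_trans BB' B'B'') _ n J le_n S; rewrite -wB'.
Qed.

(* Blocks outside [Y] are kept, so a contraction of the sub-blockade on [Y]
   extends to one of the whole (equicardinal) blockade with the same width. *)
Lemma stable_support_invariant B Y w : kappa <= 1 -> stable B ->
  (forall i, i \in I -> #|B i| = w) -> {subset Y <= I} ->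
  support_invariant e kappa tau Y B.
Proof.
move=> kappa_le1 stB cardB sYI B' BB' wB' n J [n_gt0 _ _ _ _] le_n S.
split; last exact: in_trace_contraction.
have [-> | Y_neq0] := eqVneq Y [::]; first by move/in_trace_nil; case.
have wY : width Y B = w by apply: width_equicardinal => // i /sYI; apply: cardB.
have I_neq0 : I != [::].
  have /sYI : head 0 Y \in Y by rewrite -nth0 mem_nth // lt0n size_eq0.
  by apply: contraTneq => ->.
have wI : width I B = w by apply: width_equicardinal.
have w_gt0 : (0 < w)%N.
  rewrite -wY; have [j jY ->] := width_mem B Y_neq0.
  by have [/subset_leq_card + B'j] := BB' j jY; apply/leq_trans; rewrite card_gt0.
pose B'' i := if i \in Y then B' i else B i.
have BB'' : contraction I B B''.
  move=> i iI; rewrite /B''; case: ifP => [/BB' // | _].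
  by rewrite -card_gt0 cardB.
have wB'' i : i \in I -> kappa * (width I B)%:R <= #|B'' i|%:R.
  move=> iI; rewrite /B'' wI; case: ifP => [iY | _]; first by rewrite -wY wB'.
  by rewrite cardB // ler_piMl.
move=> /(in_trace_subindex e B J S sYI)[/(stB _ BB'' wB'' n J le_n) trB'' sSY].
apply: (@eq_in_trace_blocks _ _ _ B''); first by move=> i iY; rewrite /B'' iY.
exact/(in_trace_subindex e B'' J S sYI).
Qed.

End Stable.

Section Stabilisation.
Variables (R : realFieldType) (T : finType) (e : rel T) (kappa : R) (t L : nat).
Variable I : seq nat.
Local Open Scope ring_scope.
Hypotheses (kappa_ge0 : 0 <= kappa) (kappa_le1 : kappa <= 1).
Hypotheses (I_neq0 : I != [::]) (I_le : forall i, i \in I -> (i <= L)%N).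

Lemma unstable_kills_pattern B : ~ stable e kappa t.+1 I B ->
  exists B', [/\ contraction I B B',
    forall i, i \in I -> kappa * (width I B)%:R <= #|B' i|%:R &
    exists u : pattern t L, pattern_in_trace e I B u /\ ~ pattern_in_trace e I B' u].
Proof.
move=> nstB; apply: NNPP => nex; apply: nstB => B' BB' wB' n J le_n S trB.
have [u trace_u] := pattern_of_trace I_le le_n trB.
apply/trace_u; apply: NNPP => ntrB'u; apply: nex; exists B'; split=> //.
by exists u; split=> //; apply/trace_u.
Qed.

(* Induction on an upper bound for the number of patterns still alive: each
   contraction witnessing instability kills one of them. *)
Lemma stabilise s (A : {set pattern t L}) (B : nat -> {set T}) :
  (forall i, i \in I -> B i != set0) -> (#|A| <= s)%N ->
  (forall u, pattern_in_trace e I B u -> u \in A) ->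
  exists B', [/\ contraction I B B', kappa ^+ s * (width I B)%:R <= (width I B')%:R
               & stable e kappa t.+1 I B'].
Proof.
elim: s A B => [|s IHs] A B B_neq0 cardA aliveA.
all: have [stB | /unstable_kills_pattern[B' [BB' wB' [u [trBu ntrB'u]]]]] :=
  classic (stable e kappa t.+1 I B).
all: try by exists B; split=> //;
  [move=> i iI; rewrite subxx B_neq0 | rewrite ler_piMl // exprn_ile1].
all: have uA := aliveA u trBu.
  by move: cardA; rewrite leqn0 cards_eq0 => /eqP A0; rewrite A0 inE in uA.
have B'_neq0 i : i \in I -> B' i != set0 by case/BB'.
have cardA' : (#|A :\ u| <= s)%N by move: cardA; rewrite (cardsD1 u A) uA.
have aliveA' v : pattern_in_trace e I B' v -> v \in A :\ u.
  move=> trB'v; rewrite in_setD1 aliveA ?andbT; last exact: in_trace_contraction BB' trB'v.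
  by apply/eqP => evu; apply: ntrB'u; rewrite -evu.
have [B'' [B'B'' wB'' stB'']] := IHs _ _ B'_neq0 cardA' aliveA'.
exists B''; split=> //; first exact: contraction_trans BB' B'B''.
apply: le_trans wB''; rewrite exprSr -mulrA ler_wpM2l ?exprn_ge0 //.
by have [i iI ->] := width_mem B' I_neq0; apply: wB'.
Qed.

Lemma exists_stable_equicardinal_contraction (B : nat -> {set T}) :
  (forall i, i \in I -> B i != set0) ->
  exists B' w, [/\ contraction I B B', forall i, i \in I -> #|B' i| = w,
    kappa ^+ #|{: pattern t L}| * (width I B)%:R <= w%:R & stable e kappa t.+1 I B'].
Proof.
move=> B_neq0; have [Bs [BBs wBs stBs]] :=
  stabilise (A := setT) B_neq0 (max_card _) (fun u _ => in_setT u).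
have [|Be [BsBe cardBe]] := exists_equicardinal_contraction (I := I) (B := Bs).
  by move=> i /BBs[].
exists Be, (width I Bs); split=> //; first exact: contraction_trans BBs BsBe.
by apply: stable_contraction BsBe _ stBs; apply: width_equicardinal.
Qed.

End Stabilisation.

Lemma homogeneous_support_uniform (T : finType) (e : rel T) I (B : nat -> {set T}) t Y :
  {subset Y <= I} ->
  (forall a : graph_code t, homogeneous (val a.1) (in_trace e I B (code_graph a)) Y) ->
  support_uniform e Y B t.+1.
Proof.
move=> sYI hY n J _ le_n.
have [c hc] := hY (inord n, encode_rel t J); move: hc; rewrite /code_graph /= inordK //.
have eqJ := encode_relK J le_n; have eqJ' i j := esym (eqJ i j).
case: c => hc; [right => S | left => S trS].
  split; first exact: in_trace_support.
  move=> [sSY szS]; apply/(in_trace_subindex e B J S sYI); split => //.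
  by apply: eq_in_trace_rel eqJ _; apply/(hc S sSY szS).
have [sSY szS] := in_trace_support trS.
have [trI_false _] := hc S sSY szS.
by have := trI_false (eq_in_trace_rel eqJ' ((in_trace_subindex e B J S sYI).1 trS).1).
Qed.

Unset Implicit Arguments. Set Strict Implicit.
Theorem theorem4p3 (R : realFieldType) (k tau : nat) (kappa : R) :
  (1 <= tau)%N -> (0 < kappa)%R -> (kappa <= 1)%R ->
  exists K : nat,
    forall (T : finType) (e : rel T), symmetric e -> irreflexive e ->
    forall (B : nat -> {set T}) (W : nat),
      is_blockade (iota 1 K) B -> W = width (iota 1 K) B ->
      exists (I' : seq nat) (B' : nat -> {set T}),
        uniq I' /\ {subset I' <= iota 1 K} /\ size I' = k /\
        contraction I' B B' /\
        (forall i j, i \in I' -> j \in I' -> #|B' i| = #|B' j|) /\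
        (forall i, i \in I' ->
           (kappa ^+ (2 ^ K * tau ^ tau) * W%:R <= (#|B' i|)%:R)%R) /\
        support_uniform e I' B' tau /\
        support_invariant e kappa tau I' B'.
Proof.
move=> tau_gt0 kappa_gt0 kappa_le1; case: tau tau_gt0 => // t _.
have [N ramseyN] :=
  ramsey_family (fun a : graph_code t => val a.1) (enum {: graph_code t}) k.
pose I := iota 1 N.+1; pose K := (N.+1 + #|{: pattern t N.+1}|)%N.
have I_neq0 : I != [::] by [].
have I_le i : i \in I -> (i <= N.+1)%N by rewrite mem_iota; lia.
have sIK : {subset I <= iota 1 K} by move=> i; rewrite !mem_iota; lia.
have kappa_ge0 := ltW kappa_gt0.
exists K => T e _ _ B _ [_ B_neq0 _] ->.
have [|Be [w [BBe cardBe wBe stBe]]] :=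
  exists_stable_equicardinal_contraction e t kappa_ge0 kappa_le1 I_neq0 I_le (B := B).
  by move=> i /sIK /B_neq0.
have szI : (N <= size I)%N by rewrite size_iota.
have inv_trace (a : graph_code t) : mem_invariant (in_trace e I Be (code_graph a)).
  by move=> S S'; apply: eq_in_trace_support.
have [Y [uY sYI szY hY]] := ramseyN I (iota_uniq 1 N.+1) szI _ inv_trace.
exists Y, Be; split=> //; split; first by move=> i /sYI /sIK.
split=> //; split; first by move=> i /sYI /BBe.
split; first by move=> i j /sYI/cardBe-> /sYI/cardBe->.
split.
  move=> i /sYI/cardBe->; apply: le_trans wBe; apply: ler_pM; rewrite ?exprn_ge0 //.
    apply: ler_wiXn2l => //; rewrite -[X in (X <= _)%N]muln1 leq_mul ?expn_gt0 //.
    exact: leq_trans (leq_addl _ _) (ltnW (ltn_expl _ (ltnSn 1))).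
  by rewrite ler_nat width_sub.
split; first exact: homogeneous_support_uniform sYI (fun a => hY a (mem_enum _ a)).
exact: stable_support_invariant kappa_le1 stBe cardBe sYI.
Qed.
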